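(* Let $A$ be a reflexive, Fréchet smooth normed vector space over $\mathbb C$, with $A^\vee$ given the dual norm. Then on $\mathrm{Max}\,A$ the topology generated by the sets $\mathbf U_r(a)=\{V\in\mathrm{Max}\,A:d(a,V)>r\}$, $a\in A$, $r>0$, coincides with the topology consisting of the sets $\{V\in\mathrm{Max}\,A:F(V)\in\mathcal U\}$, with $\mathcal U\subset\mathrm{Sub}\,A^\vee$ open in the lower Vietoris topology of $A^\vee$.
   Context: $\mathrm{Max}\,A$ is the set of closed subspaces of $A$; $A^\vee$ the continuous dual; $F(V)=\{\phi\in A^\vee:\phi|_V=0\}$. The lower Vietoris topology on the set $\mathrm{Sub}\,A^\vee$ of subspaces of $A^\vee$ is generated by $\{\mathcal V:\mathcal V\cap\mathcal O\ne\emptyset\}$, $\mathcal O\subset A^\vee$ norm-open. $A$ is Fréchet smooth if for every $a$ with $\|a\|=1$ the limit $\lim_{\delta\to0}(\|a-\delta b\|-\|a\|)/\delta$ exists uniformly in $b$ with $\|b\|=1$. *)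

From HB Require Import structures.
From mathcomp Require Import all_boot all_order all_algebra.
From mathcomp Require Import all_classical all_reals all_analysis.
From mathcomp Require Import complex.
Set Implicit Arguments. Unset Strict Implicit. Unset Printing Implicit Defensive.
Import Order.TTheory GRing.Theory Num.Theory ComplexField.
Import numFieldNormedType.Exports.
Local Open Scope classical_set_scope.
Local Open Scope ring_scope.

Section Defs.
Variable R : realType.
Local Notation C := (R[i]).
Variable A : normedModType C.

(* real-valued norm (the C-valued norm of A is real) *)
Definition rnorm (x : A) : R := complex.Re `|x|.

(* topology on a subset X of T generated by the subbasis S (intersected with X):
   W is open iff W is contained in X and every point of W has a neighbourhood
   X ∩ S_1 ∩ ... ∩ S_n (n >= 0, S_i in S) contained in W. *)
Definition gen_open (T : Type) (X : set T) (S : set (set T)) (W : set T) : Prop :=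
  W `<=` X /\
  forall x, W x -> exists (n : nat) (f : 'I_n -> set T),
    (forall i, S (f i)) /\ (forall i, f i x) /\
    (forall y, X y -> (forall i, f i y) -> W y).

Definition is_subspace (V : set A) : Prop :=
  V 0 /\ (forall x y, V x -> V y -> V (x + y)) /\
  (forall (c : C) x, V x -> V (c *: x)).

Definition MaxA : set (set A) := [set V | is_subspace V /\ closed V].

Definition dist (a : A) (V : set A) : R := inf [set rnorm (a - v) | v in V].

Definition Uset (r : R) (a : A) : set (set A) := [set V | MaxA V /\ r < dist a V].

Definition Usubbasis : set (set (set A)) :=
  [set U | exists (a : A) (r : R), 0 < r /\ U = Uset r a].

Definition dual : set (A -> C) :=
  [set phi | (forall x y, phi (x + y) = phi x + phi y) /\
             (forall (c : C) x, phi (c *: x) = c * phi x) /\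
             continuous (phi : A -> (C : numFieldType)^o)].

Definition dnorm (phi : A -> C) : R :=
  sup [set complex.Re `|phi a| | a in [set a : A | rnorm a <= 1]].

Definition dsub (phi psi : A -> C) : A -> C := fun x => phi x - psi x.
Definition dadd (phi psi : A -> C) : A -> C := fun x => phi x + psi x.
Definition dscale (c : C) (phi : A -> C) : A -> C := fun x => c * phi x.

(* Sub A^∨ : all (not necessarily closed) linear subspaces of A^∨ *)
Definition SubDual : set (set (A -> C)) :=
  [set W | W `<=` dual /\ W (fun _ => 0) /\
           (forall phi psi, W phi -> W psi -> W (dadd phi psi)) /\
           (forall c phi, W phi -> W (dscale c phi))].

Definition dual_open (O : set (A -> C)) : Prop :=
  O `<=` dual /\
  forall phi, O phi -> exists e : R, 0 < e /\
    forall psi, dual psi -> dnorm (dsub psi phi) < e -> O psi.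

Definition LVsubbasis : set (set (set (A -> C))) :=
  [set UU | exists O, dual_open O /\
     UU = [set W | SubDual W /\ exists phi, W phi /\ O phi]].

Definition LV_open (UU : set (set (A -> C))) : Prop :=
  gen_open SubDual LVsubbasis UU.

Definition annih (V : set A) : set (A -> C) :=
  [set phi | dual phi /\ forall v, V v -> phi v = 0].

Definition reflexive_space : Prop :=
  forall Phi : (A -> C) -> C,
    (forall phi psi, dual phi -> dual psi -> Phi (dadd phi psi) = Phi phi + Phi psi) ->
    (forall c phi, dual phi -> Phi (dscale c phi) = c * Phi phi) ->
    (exists M : R, forall phi, dual phi -> complex.Re `|Phi phi| <= M * dnorm phi) ->
    exists a : A, forall phi, dual phi -> Phi phi = phi a.

Definition frechet_smooth : Prop :=
  forall a : A, rnorm a = 1 ->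
    exists L : A -> R, forall e : R, 0 < e -> exists eta : R, 0 < eta /\
      forall (b : A) (d : R), rnorm b = 1 -> d != 0 -> `|d| < eta ->
        `|(rnorm (a - (d%:C)%C *: b) - rnorm a) / d - L b| < e.

End Defs.

From Pilot Require Import Defs.
From HB Require Import structures.
From mathcomp Require Import all_boot all_order all_algebra.
From mathcomp Require Import all_classical all_reals all_analysis.
From mathcomp Require Import complex ring lra.
Import Order.TTheory GRing.Theory Num.Theory ComplexField Normc.
Import numFieldNormedType.Exports.
Local Open Scope classical_set_scope.
Local Open Scope ring_scope.
Local Open Scope complex_scope.
Set Implicit Arguments. Unset Strict Implicit. Unset Printing Implicit Defensive.

(* The sets [U_r(a)] and the lower Vietoris subbasic sets are matched through
   the norm-open sets [O(a, r) = {phi | r ||phi|| < |phi a|}] ([dist_witness]):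
   by Hahn-Banach, [d(a, V) > r] iff [F(V)] meets [O(a, r)], so every open set
   of the first topology is the preimage under [F] of a lower Vietoris open set.
   Conversely, let [F(V0)] meet a norm-open [O] at some [phi != 0].  By
   reflexivity (the easy half of James' theorem) [phi] attains its norm at a
   unit vector [a].  If [d(a, V) > 1 - delta], the Hahn-Banach functional [psi]
   of norm at most [1] with [psi a = d(a, V)] lies in [F(V)], and Smulian's
   lemma, where the Frechet smoothness of the norm at [a] enters, makes
   [||phi|| psi] close to [phi], hence in [O].  So [U_{1-delta}(a)] is a
   neighbourhood of [V0] on which [F(V)] keeps meeting [O]. *)

Section ComplexModulus.
Variable R : realType.
Implicit Types (z : R[i]) (r : R).

Lemma normr_normc z : `|z| = (normc z)%:C.
Proof. by case: z. Qed.

Lemma Re_normr z : complex.Re `|z| = normc z.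
Proof. by rewrite normr_normc. Qed.

Lemma normc_ge0 z : 0 <= normc z.
Proof. by case: z => a b; exact: sqrtr_ge0. Qed.

Lemma normc_eq0 z : (normc z == 0) = (z == 0).
Proof. by rewrite -(inj_eq (@complexI _)) -normr_normc normr_eq0. Qed.

Lemma normc_real r : normc r%:C = `|r|.
Proof. by rewrite /normc /= expr0n /= addr0 sqrtr_sqr. Qed.

Lemma Re_le_normc z : complex.Re z <= normc z.
Proof.
case: z => a b /=; apply: le_trans (ler_norm a) _.
by rewrite -sqrtr_sqr ler_wsqrtr // lerDl sqr_ge0.
Qed.

Lemma Re_realM r z : complex.Re (r%:C * z) = r * complex.Re z.
Proof. by case: z => a b /=; rewrite mul0r subr0. Qed.

Lemma normc_phase z : z != 0 -> normc (`|z| / z) = 1.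
Proof.
move=> z0; have nz0 : normc z != 0 by rewrite normc_eq0.
apply: (mulfI nz0); rewrite -normcM mulrCA mulfV // mulr1 normr_normc.
by rewrite normc_real ger0_norm ?normc_ge0 // mulr1.
Qed.

End ComplexModulus.

Section RealHahnBanach.
Variables (R : realType) (X : lmodType R[i]) (D : set X) (p : X -> R).
Hypothesis DD : forall x y, D x -> D y -> D (x + y).
Hypothesis DZ : forall c x, D x -> D (c *: x).
Hypothesis pD : forall x y, D x -> D y -> p (x + y) <= p x + p y.
Hypothesis pZ : forall r x, 0 <= r -> D x -> p (r%:C *: x) = r * p x.
Variables (S : set X) (f : X -> R).
Hypothesis SsubD : forall x, S x -> D x.
Hypothesis S0 : S 0.
Hypothesis SD : forall x y, S x -> S y -> S (x + y).
Hypothesis SZ : forall r x, S x -> S (r%:C *: x).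
Hypothesis fD : forall x y, S x -> S y -> f (x + y) = f x + f y.
Hypothesis fZ : forall r x, S x -> f (r%:C *: x) = r * f x.
Hypothesis f_le_p : forall x, S x -> f x <= p x.

(* Partial extensions of [f] are handled through their graphs, so that Zorn's
   lemma can be applied to sets ordered by inclusion. *)
Definition extension_graph (G : set (X * R)) :=
  [/\ (forall x y1 y2, G (x, y1) -> G (x, y2) -> y1 = y2),
      (forall x y x' y', G (x, y) -> G (x', y') -> G (x + x', y + y')),
      (forall r x y, G (x, y) -> G (r%:C *: x, r * y)),
      (forall x y, G (x, y) -> D x /\ y <= p x) &
      (forall x, S x -> G (x, f x))].

Lemma extension_graph_bigcup (F : set (set (X * R))) :
  F `<=` (fun G => G = set0 \/ extension_graph G) -> total_on F subset ->
  let U := \bigcup_(G in F) G in U = set0 \/ extension_graph U.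
Proof.
move=> FP Ftot U.
have [[G0 [FG0 gG0]]|noG] := pselect (exists G, F G /\ extension_graph G); last first.
  left; apply/seteqP; split => // z [G FG Gz].
  have [G0|gG] := FP G FG; first by rewrite G0 in Gz.
  by exfalso; apply: noG; exists G.
have common a b : U a -> U b -> exists2 H, F H /\ extension_graph H & H a /\ H b.
  move=> [G1 FG1 G1a] [G2 FG2 G2b].
  have [G12|G21] := Ftot _ _ FG1 FG2.
    have [E|gG2] := FP G2 FG2; first by rewrite E in G2b.
    by exists G2 => //; split => //; exact: G12.
  have [E|gG1] := FP G1 FG1; first by rewrite E in G1a.
  by exists G1 => //; split => //; exact: G21.
right; split.
- move=> x y1 y2 U1 U2; have [H [_ [Hf _ _ _ _]] [H1 H2]] := common _ _ U1 U2.
  exact: Hf H1 H2.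
- move=> x y x' y' U1 U2; have [H [FH [_ HD _ _ _]] [H1 H2]] := common _ _ U1 U2.
  by exists H => //; exact: HD.
- move=> r x y U1; have [H [FH [_ _ HZ _ _]] [H1 _]] := common _ _ U1 U1.
  by exists H => //; exact: HZ.
- move=> x y U1; have [H [_ [_ _ _ Hp _]] [H1 _]] := common _ _ U1 U1.
  exact: Hp.
- by move=> x Sx; exists G0 => //; case: gG0 => _ _ _ _; apply.
Qed.

Section OneStepExtension.
Variable G : set (X * R).
Hypothesis gG : extension_graph G.
Variable x0 : X.
Hypothesis Dx0 : D x0.
Hypothesis x0_new : ~ exists y, G (x0, y).

Let G_fun : forall x y1 y2, G (x, y1) -> G (x, y2) -> y1 = y2.
Proof. by case: gG. Qed.
Let GD : forall x y x' y', G (x, y) -> G (x', y') -> G (x + x', y + y').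
Proof. by case: gG. Qed.
Let GZ : forall r x y, G (x, y) -> G (r%:C *: x, r * y).
Proof. by case: gG. Qed.
Let G_le_p : forall x y, G (x, y) -> D x /\ y <= p x.
Proof. by case: gG. Qed.

Let G00 : G (0, 0).
Proof.
by case: gG => _ _ GZ' _ GS; have := GZ' 0 _ _ (GS _ S0); rewrite scale0r mul0r.
Qed.

Let GN x y : G (x, y) -> G (- x, - y).
Proof. by move=> /(GZ (-1)); rewrite mulN1r rmorphN rmorph1 scaleN1r. Qed.

Let DN x : D x -> D (- x).
Proof. by move=> Dx; rewrite -scaleN1r; exact: DZ. Qed.

Let gap s1 y1 s2 y2 : G (s1, y1) -> G (s2, y2) ->
  y1 - p (s1 - x0) <= p (s2 + x0) - y2.
Proof.
move=> G1 G2; have [_ le12] := G_le_p (GD G1 G2).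
have [D1 _] := G_le_p G1; have [D2 _] := G_le_p G2.
have : p (s1 + s2) <= p (s1 - x0) + p (s2 + x0).
  have -> : s1 + s2 = (s1 - x0) + (s2 + x0) by rewrite addrACA addNr addr0.
  by apply: pD; apply: DD => //; exact: DN.
by move: le12 => /= le12 le3; lra.
Qed.

(* The value [c] given to [x0] is squeezed between the two sides of [gap]. *)
Let E := [set z | exists s y, G (s, y) /\ z = y - p (s - x0)].
Let c := sup E.

Let hasE : has_sup E.
Proof.
split; first by exists (0 - p (0 - x0)), 0, 0.
by exists (p (0 + x0) - 0) => z [s [y [Gsy ->]]]; exact: gap G00.
Qed.

Let c_ge s y : G (s, y) -> y - p (s - x0) <= c.
Proof. by move=> Gsy; apply: sup_upper_bound => //; exists s, y. Qed.

Let c_le s y : G (s, y) -> c <= p (s + x0) - y.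
Proof.
move=> Gsy; apply: ge_sup; first by case: hasE.
by move=> z [s' [y' [Gsy' ->]]]; exact: gap.
Qed.

Let B := [set z | exists s y t, G (s, y) /\ z = (s + t%:C *: x0, y + t * c)].

Let coord_x0_uniq s y t s' y' t' : G (s, y) -> G (s', y') ->
  s + t%:C *: x0 = s' + t'%:C *: x0 -> t = t'.
Proof.
move=> G1 G2 E1; have [//|tt] := eqVneq t t'; exfalso; apply: x0_new.
have tt0 : t - t' != 0 by rewrite subr_eq0.
exists ((t - t')^-1 * (y' - y)).
suff -> : x0 = ((t - t')^-1)%:C *: (s' - s) by apply: GZ; apply: GD => //; exact: GN.
have -> : s' - s = (t - t')%:C *: x0.
  rewrite rmorphB scalerBl; apply: (addrI s); apply: (addIr (t'%:C *: x0)).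
  by rewrite [s + (s' - s)]addrC subrK addrA subrK E1.
by rewrite scalerA -rmorphM mulVf // scale1r.
Qed.

Let B_le_p s y t : G (s, y) -> y + t * c <= p (s + t%:C *: x0).
Proof.
move=> Gsy; have [Ds _] := G_le_p Gsy.
have [t0|t0|->] := ltgtP t 0; last by rewrite scale0r addr0 mul0r addr0; case: (G_le_p Gsy).
- have u0 : 0 < - t by rewrite oppr_gt0.
  have G1 := GZ (- t)^-1 Gsy; have [D1 _] := G_le_p G1.
  have -> : s + t%:C *: x0 = (- t)%:C *: ((- t)^-1%:C *: s - x0).
    rewrite scalerDr scalerA -rmorphM mulfV ?gt_eqF // scale1r.
    by rewrite scalerN -scaleNr -rmorphN opprK.
  rewrite pZ; [|exact: ltW|by apply: DD => //; exact: DN].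
  have := ler_wpM2l (ltW u0) (c_ge G1).
  by rewrite mulrBr mulrA mulfV ?gt_eqF // mul1r; lra.
- have G1 := GZ t^-1 Gsy; have [D1 _] := G_le_p G1.
  have -> : s + t%:C *: x0 = t%:C *: (t^-1%:C *: s + x0).
    by rewrite scalerDr scalerA -rmorphM mulfV ?gt_eqF // scale1r.
  rewrite pZ; [|exact: ltW|exact: DD].
  have := ler_wpM2l (ltW t0) (c_le G1).
  by rewrite mulrBr mulrA mulfV ?gt_eqF // mul1r; lra.
Qed.

Lemma extension_graph_step : exists2 B, extension_graph B & G `<` B.
Proof.
exists B; last first.
  split; first by move=> [s y] Gsy; exists s, y, 0; rewrite scale0r addr0 mul0r addr0.
  move=> BG; apply: x0_new; exists c.
  by apply: BG; exists 0, 0, 1; rewrite scale1r add0r mul1r add0r.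
split.
- move=> x y1 y2 [s [y [t [Gsy [-> ->]]]]] [s' [y' [t' [Gsy' []]]]] Ex ->.
  have tt := coord_x0_uniq Gsy Gsy' Ex; subst t'.
  have ss : s = s' by move/addIr: Ex.
  by subst s'; rewrite (G_fun Gsy Gsy').
- move=> x y x' y' [s [yy [t [Gsy [-> ->]]]]] [s' [yy' [t' [Gsy' [-> ->]]]]].
  exists (s + s'), (yy + yy'), (t + t'); split; first exact: GD.
  by rewrite rmorphD scalerDl mulrDl; congr pair; rewrite addrACA.
- move=> r x y [s [yy [t [Gsy [-> ->]]]]].
  exists (r%:C *: s), (r * yy), (r * t); split; first exact: GZ.
  by rewrite scalerDr scalerA -rmorphM mulrDr mulrA.
- move=> x y [s [yy [t [Gsy [-> ->]]]]]; split; last exact: B_le_p.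
  by apply: DD; [case: (G_le_p Gsy)|exact: DZ].
- move=> x Sx; exists x, (f x), 0; split; first by case: gG => _ _ _ _; apply.
  by rewrite scale0r addr0 mul0r addr0.
Qed.

End OneStepExtension.

Lemma real_hahn_banach : exists g : X -> R,
  [/\ (forall x y, D x -> D y -> g (x + y) = g x + g y),
      (forall r x, D x -> g (r%:C *: x) = r * g x),
      (forall x, D x -> g x <= p x) &
      (forall x, S x -> g x = f x)].
Proof.
have [G [PG Gmax]] := Zorn_bigcup extension_graph_bigcup.
have gG : extension_graph G.
  case: PG => // G0; exfalso.
  apply: (Gmax [set z | S z.1 /\ z.2 = f z.1]); last first.
    right; split.
    - by move=> x y1 y2 /= [_ ->] [_ ->].
    - by move=> x y x' y' /= [Sx ->] [Sx' ->]; split; [exact: SD|rewrite fD].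
    - by move=> r x y /= [Sx ->]; split; [exact: SZ|rewrite fZ].
    - by move=> x y /= [Sx ->]; split; [exact: SsubD|exact: f_le_p].
    - by [].
  by rewrite G0; split => // sub; have := sub (0, f 0) (conj S0 erefl).
have G_total x : D x -> exists y, G (x, y).
  move=> Dx; apply: contrapT => nx.
  have [B gB GB] := extension_graph_step gG Dx nx.
  exact: Gmax _ GB (or_intror gB).
case: gG => G_fun GD GZ G_le_p GS.
pose g x := xget 0 [set y | G (x, y)].
have Gg x : D x -> G (x, g x) by move=> Dx; exact: (xgetPex 0 (G_total x Dx)).
exists g; split.
- by move=> x y Dx Dy; apply: G_fun (Gg _ (DD Dx Dy)) (GD _ _ _ _ (Gg _ Dx) (Gg _ Dy)).
- by move=> r x Dx; apply: G_fun (Gg _ (DZ _ Dx)) (GZ _ _ _ (Gg _ Dx)).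
- by move=> x Dx; have [_] := G_le_p _ _ (Gg _ Dx).
- by move=> x Sx; apply: G_fun (Gg _ (SsubD Sx)) (GS _ Sx).
Qed.

End RealHahnBanach.

Section Complexification.
Variables (R : realType) (X : lmodType R[i]) (D : set X) (g : X -> R).
Hypothesis DZ : forall c x, D x -> D (c *: x).
Hypothesis gD : forall x y, D x -> D y -> g (x + y) = g x + g y.
Hypothesis gZ : forall r x, D x -> g (r%:C *: x) = r * g x.

Definition complexify x : R[i] := (g x)%:C - 'i * (g ('i *: x))%:C.

Lemma Re_complexify x : complex.Re (complexify x) = g x.
Proof. by rewrite raddfB /= mul0r mulr0 !subr0. Qed.

Lemma complexifyD x y : D x -> D y -> complexify (x + y) = complexify x + complexify y.
Proof. by move=> Dx Dy; rewrite /complexify scalerDr !gD ?rmorphD //=; [ring|exact: DZ..]. Qed.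

Lemma complexifyZ c x : D x -> complexify (c *: x) = c * complexify x.
Proof.
move=> Dx; have gN y : D y -> g (- y) = - g y.
  move=> Dy; have -> : - y = (-1 : R)%:C *: y by rewrite rmorphN rmorph1 scaleN1r.
  by rewrite gZ // mulN1r.
have hR r y : D y -> complexify (r%:C *: y) = r%:C * complexify y.
  move=> Dy; rewrite /complexify.
  have -> : 'i *: (r%:C *: y) = r%:C *: ('i *: y) by rewrite !scalerA mulrC.
  by rewrite !gZ ?rmorphM //=; [ring|exact: DZ].
have hi y : D y -> complexify ('i *: y) = 'i * complexify y.
  move=> Dy; rewrite /complexify scalerA -expr2 sqr_i scaleN1r gN // rmorphN /=.
  by rewrite mulrBr mulrA -expr2 sqr_i; ring.
rewrite [c]complexE scalerDl -scalerA complexifyD ?hR ?hi //; try by do !apply: DZ.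
by rewrite hR // mulrDl mulrA.
Qed.

End Complexification.

Section ComplexHahnBanach.
Variables (R : realType) (X : lmodType R[i]) (D : set X) (p : X -> R).
Hypothesis DD : forall x y, D x -> D y -> D (x + y).
Hypothesis DZ : forall c x, D x -> D (c *: x).
Hypothesis pD : forall x y, D x -> D y -> p (x + y) <= p x + p y.
Hypothesis pZ : forall c x, D x -> p (c *: x) = normc c * p x.
Variables (S : set X) (f : X -> R[i]).
Hypothesis SsubD : forall x, S x -> D x.
Hypothesis S0 : S 0.
Hypothesis SD : forall x y, S x -> S y -> S (x + y).
Hypothesis SZ : forall c x, S x -> S (c *: x).
Hypothesis fD : forall x y, S x -> S y -> f (x + y) = f x + f y.
Hypothesis fZ : forall c x, S x -> f (c *: x) = c * f x.
Hypothesis f_le_p : forall x, S x -> normc (f x) <= p x.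

Let p_ge0 x : D x -> 0 <= p x.
Proof.
move=> Dx; have DNx : D (- x) by rewrite -scaleN1r; exact: DZ.
have := pD Dx DNx; rewrite subrr -scaleN1r !pZ // normcN normc1 mul1r.
by rewrite -(scale0r x) pZ // normc0 mul0r; lra.
Qed.

Lemma complex_hahn_banach : exists g : X -> R[i],
  [/\ (forall x y, D x -> D y -> g (x + y) = g x + g y),
      (forall c x, D x -> g (c *: x) = c * g x),
      (forall x, D x -> normc (g x) <= p x) &
      (forall x, S x -> g x = f x)].
Proof.
have pZr r x : 0 <= r -> D x -> p (r%:C *: x) = r * p x.
  by move=> r0 Dx; rewrite pZ // normc_real ger0_norm.
have RefD x y : S x -> S y -> complex.Re (f (x + y)) = complex.Re (f x) + complex.Re (f y).
  by move=> Sx Sy; rewrite fD // raddfD.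
have RefZ r x : S x -> complex.Re (f (r%:C *: x)) = r * complex.Re (f x).
  by move=> Sx; rewrite fZ // Re_realM.
have [gr [grD grZ gr_le_p grS]] := @real_hahn_banach R X D p DD DZ pD pZr S
  (fun x => complex.Re (f x)) SsubD S0 SD (fun r x Sx => SZ r%:C Sx) RefD RefZ
  (fun x Sx => le_trans (Re_le_normc (f x)) (f_le_p Sx)).
exists (complexify gr); split.
- exact: complexifyD DZ grD.
- exact: complexifyZ DZ grD grZ.
- move=> x Dx; have [->|hx0] := eqVneq (complexify gr x) 0; first by rewrite normc0 p_ge0.
  (* rotate [x] so that the value becomes real and nonnegative *)
  pose u := `|complexify gr x| / complexify gr x.
  have : complexify gr (u *: x) = (normc (complexify gr x))%:C.
    by rewrite (complexifyZ DZ grD grZ) // /u mulfVK // normr_normc.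
  move=> /(congr1 (@complex.Re R)); rewrite Re_complexify /= => <-.
  by rewrite (le_trans (gr_le_p _ _)) ?pZ ?normc_phase ?mul1r //; exact: DZ.
- move=> x Sx; rewrite /complexify !grS //; last exact: SZ.
  rewrite fZ // [_ * f x]mulrC ReiNIm rmorphN /= mulrN opprK.
  by rewrite [RHS]complexE.
Qed.

End ComplexHahnBanach.

Section DualSpace.
Variables (R : realType) (A : normedModType R[i]).
Local Notation C := (R[i]).
Local Notation rnorm := (@rnorm R A).
Local Notation dual := (@dual R A).
Local Notation dnorm := (@dnorm R A).
Local Notation dadd := (@Defs.dadd R A).
Local Notation dsub := (@Defs.dsub R A).
Local Notation dscale := (@Defs.dscale R A).
Implicit Types (x y : A) (phi psi : A -> C).

Lemma normr_rnorm x : `|x| = (rnorm x)%:C.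
Proof. by rewrite /Defs.rnorm RRe_real // ger0_real. Qed.

Lemma rnorm_ge0 x : 0 <= rnorm x.
Proof. by have := normr_ge0 x; rewrite normr_rnorm -[0 : C]/(0%:C) lecR. Qed.

Lemma rnormD x y : rnorm (x + y) <= rnorm x + rnorm y.
Proof. by have := ler_normD x y; rewrite !normr_rnorm -rmorphD lecR. Qed.

Lemma rnormZ (c : C) x : rnorm (c *: x) = normc c * rnorm x.
Proof.
by apply: complexI; rewrite rmorphM /= -!normr_rnorm -normr_normc normrZ.
Qed.

Lemma rnorm0 : rnorm 0 = 0.
Proof. by apply: complexI; rewrite -normr_rnorm normr0. Qed.

Lemma rnorm_gt0 x : x != 0 -> 0 < rnorm x.
Proof. by move=> x0; rewrite -ltcR -normr_rnorm normr_gt0. Qed.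

Definition lin_functional phi :=
  (forall x y, phi (x + y) = phi x + phi y) /\ (forall (c : C) x, phi (c *: x) = c * phi x).

Lemma lin_functional0 phi : lin_functional phi -> phi 0 = 0.
Proof. by move=> [_ phiZ]; rewrite -(scale0r 0) phiZ mul0r. Qed.

Lemma lin_functionalB phi : lin_functional phi -> forall x y, phi (x - y) = phi x - phi y.
Proof. by move=> [phiD phiZ] x y; rewrite phiD -scaleN1r phiZ mulN1r. Qed.

Lemma dual_lin phi : dual phi -> lin_functional phi.
Proof. by case=> phiD [phiZ _]. Qed.

Lemma dual_bounded phi : dual phi ->
  exists2 K : R, 0 <= K & forall x, normc (phi x) <= K * rnorm x.
Proof.
move=> [phiD [phiZ phi_cont]].
have phi0 : phi 0 = 0 by apply: lin_functional0.
have := phi_cont 0; move=> /cvgrPdist_lt /(_ 1 ltr01) /nbhs_norm0P [e /= e0 he].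
have eE : e = (complex.Re e)%:C by rewrite RRe_real // gtr0_real.
have Re_e0 : 0 < complex.Re e by rewrite eE ltcR in e0.
exists (2 / complex.Re e); first by rewrite divr_ge0 // ltW.
move=> x; have [->|x0] := eqVneq x 0; first by rewrite phi0 normc0 rnorm0 mulr0.
have nx0 := rnorm_gt0 x0.
(* [k x] lies in the ball of radius [e] where [|phi| < 1] *)
pose k := complex.Re e / (2 * rnorm x).
have k0 : 0 < k by rewrite divr_gt0 // mulr_gt0.
have kx : k * rnorm x = complex.Re e / 2 by rewrite /k; field; rewrite gt_eqF.
have hk : `|k%:C *: x| < e.
  rewrite normrZ normr_rnorm normr_normc normc_real gtr0_norm // -rmorphM eE ltcR kx.
  lra.
have := he _ hk; rewrite /= phi0 sub0r normrN phiZ normr_normc normcM normc_real.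
rewrite gtr0_norm // -[1 : C]/(1%:C) ltcR => hphi.
have -> : 2 / complex.Re e * rnorm x = k^-1 by rewrite /k; field; rewrite !gt_eqF.
by apply: ltW; rewrite -(ltr_pM2l k0) mulfV ?gt_eqF.
Qed.

Lemma bounded_dual phi : lin_functional phi ->
  (exists K : R, forall x, normc (phi x) <= K * rnorm x) -> dual phi.
Proof.
move=> phi_lin [K hK]; have [phiD phiZ] := phi_lin; do 2 split => //.
move=> x; apply/cvgrPdist_lt => eps eps0.
have eE : eps = (complex.Re eps)%:C by rewrite RRe_real // gtr0_real.
have E0 : 0 < complex.Re eps by rewrite eE ltcR in eps0.
have K0 : 0 < `|K| + 1 by rewrite ltr_pwDr.
apply/nbhs_normP; exists ((complex.Re eps / (`|K| + 1))%:C); first by rewrite /= ltcR divr_gt0.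
move=> t /=; rewrite normr_rnorm ltcR => h.
rewrite -(lin_functionalB phi_lin) normr_normc eE ltcR.
apply: le_lt_trans (hK _) _; apply: (le_lt_trans (y := (`|K| + 1) * rnorm (x - t))).
  by rewrite ler_wpM2r ?rnorm_ge0 // (le_trans (ler_norm K)) // lerDl.
by rewrite mulrC -ltr_pdivlMr.
Qed.

Lemma dual0 : dual (fun _ => 0).
Proof.
apply: bounded_dual; first by split => *; rewrite ?addr0 ?mulr0.
by exists 0 => x; rewrite normc0 mul0r.
Qed.

Lemma dualD phi psi : dual phi -> dual psi -> dual (dadd phi psi).
Proof.
move=> dphi dpsi; have [phiD phiZ] := dual_lin dphi; have [psiD psiZ] := dual_lin dpsi.
have [K1 _ h1] := dual_bounded dphi; have [K2 _ h2] := dual_bounded dpsi.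
apply: bounded_dual.
  by split => [x y|c x]; rewrite /Defs.dadd ?phiD ?psiD ?phiZ ?psiZ; ring.
exists (K1 + K2) => x; rewrite /Defs.dadd mulrDl.
by apply: le_trans (le_normcD _ _) _; apply: lerD.
Qed.

Lemma dualZ c phi : dual phi -> dual (dscale c phi).
Proof.
move=> dphi; have [phiD phiZ] := dual_lin dphi; have [K _ hK] := dual_bounded dphi.
apply: bounded_dual.
  by split => [x y|d x]; rewrite /Defs.dscale ?phiD ?phiZ; ring.
exists (normc c * K) => x; rewrite /Defs.dscale normcM -mulrA.
by rewrite ler_wpM2l ?normc_ge0.
Qed.

Lemma dualB phi psi : dual phi -> dual psi -> dual (dsub phi psi).
Proof.
move=> dphi dpsi; have := dualD dphi (dualZ (-1) dpsi).
by congr dual; apply: funext => x; rewrite /Defs.dadd /Defs.dsub /Defs.dscale mulN1r.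
Qed.

Let dnorm_has_sup phi : dual phi ->
  has_sup [set complex.Re `|phi a| | a in [set a : A | rnorm a <= 1]].
Proof.
move=> dphi; have [K K0 hK] := dual_bounded dphi; split.
  by exists (complex.Re `|phi 0|), 0 => //=; rewrite rnorm0.
exists K => _ [a /= a1 <-]; rewrite (le_trans (hK a)) //.
by rewrite -[leRHS]mulr1 ler_wpM2l.
Qed.

Lemma dnorm_ge0 phi : dual phi -> 0 <= dnorm phi.
Proof.
move=> dphi; apply: le_trans (normc_ge0 (phi 0)) _; rewrite -Re_normr.
by apply: sup_upper_bound; [exact: dnorm_has_sup|exists 0 => //=; rewrite rnorm0].
Qed.

Lemma normc_le_dnorm phi x : dual phi -> normc (phi x) <= dnorm phi * rnorm x.
Proof.
move=> dphi; have [phiD phiZ] := dual_lin dphi.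
have [->|x0] := eqVneq x 0; first by rewrite lin_functional0 ?normc0 ?rnorm0 ?mulr0.
have nx0 := rnorm_gt0 x0; have ix0 : 0 < (rnorm x)^-1 by rewrite invr_gt0.
have : normc (phi ((rnorm x)^-1%:C *: x)) <= dnorm phi.
  rewrite -Re_normr; apply: sup_upper_bound; first exact: dnorm_has_sup.
  exists ((rnorm x)^-1%:C *: x) => //=.
  by rewrite rnormZ normc_real gtr0_norm // mulVf ?gt_eqF.
rewrite phiZ normcM normc_real gtr0_norm // => /(ler_wpM2r (ltW nx0)).
by rewrite mulrAC mulVf ?gt_eqF // mul1r.
Qed.

Lemma dnorm_le phi (K : R) : dual phi -> 0 <= K ->
  (forall x, normc (phi x) <= K * rnorm x) -> dnorm phi <= K.
Proof.
move=> dphi K0 hK; apply: ge_sup; first by case: (dnorm_has_sup dphi).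
move=> _ [a /= a1 <-]; rewrite (le_trans (hK a)) //.
by rewrite -[leRHS]mulr1 ler_wpM2l.
Qed.

Lemma dnorm_le_Re phi (K : R) : dual phi -> 0 <= K ->
  (forall b, rnorm b = 1 -> complex.Re (phi b) <= K) -> dnorm phi <= K.
Proof.
move=> dphi K0 hK; have [phiD phiZ] := dual_lin dphi; apply: dnorm_le => // x.
have [phix0|phix0] := eqVneq (phi x) 0; first by rewrite phix0 normc0 mulr_ge0 ?rnorm_ge0.
have x0 : x != 0 by apply: contraNneq phix0 => ->; rewrite lin_functional0.
have nx0 := rnorm_gt0 x0; have ix0 : 0 < (rnorm x)^-1 by rewrite invr_gt0.
(* rotating [x] by a phase makes [phi x] real and nonnegative *)
pose u := `|phi x| / phi x.
have := hK ((rnorm x)^-1%:C *: (u *: x)).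
rewrite !rnormZ normc_phase // normc_real gtr0_norm // mul1r mulVf ?gt_eqF //.
move=> /(_ erefl); rewrite !phiZ /u mulfVK // normr_normc -rmorphM /=.
by move=> /(ler_wpM2r (ltW nx0)); rewrite mulrAC mulVf ?gt_eqF // mul1r.
Qed.

Lemma dnormD phi psi : dual phi -> dual psi ->
  dnorm (dadd phi psi) <= dnorm phi + dnorm psi.
Proof.
move=> dphi dpsi; apply: dnorm_le; first exact: dualD.
  by rewrite addr_ge0 ?dnorm_ge0.
move=> x; rewrite /Defs.dadd mulrDl; apply: le_trans (le_normcD _ _) _.
by rewrite lerD ?normc_le_dnorm.
Qed.

Lemma dnormZ c phi : dual phi -> dnorm (dscale c phi) = normc c * dnorm phi.
Proof.
move=> dphi; have dcphi := dualZ c dphi; apply/eqP; rewrite eq_le; apply/andP; split.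
  apply: dnorm_le => //; first by rewrite mulr_ge0 ?normc_ge0 ?dnorm_ge0.
  by move=> x; rewrite /Defs.dscale normcM -mulrA ler_wpM2l ?normc_ge0 ?normc_le_dnorm.
have [c0|c0] := eqVneq c 0; first by rewrite c0 normc0 mul0r -c0 dnorm_ge0.
have nc0 : 0 < normc c by rewrite lt_def normc_eq0 c0 normc_ge0.
rewrite -ler_pdivlMl //; apply: dnorm_le => //.
  by rewrite mulr_ge0 ?invr_ge0 ?dnorm_ge0 // ltW.
move=> x; have := normc_le_dnorm x dcphi; rewrite /Defs.dscale normcM => h.
by rewrite -(ler_pM2l nc0) !mulrA mulfV ?gt_eqF // mul1r.
Qed.

Lemma dnorm_gt0 phi x : dual phi -> phi x != 0 -> 0 < dnorm phi.
Proof.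
move=> dphi phix0; rewrite lt_def dnorm_ge0 // andbT; apply: contraNneq phix0 => d0.
by rewrite -normc_eq0 eq_le normc_ge0 andbT (le_trans (normc_le_dnorm x dphi)) // d0 mul0r.
Qed.

End DualSpace.

Section HahnBanachDual.
Variables (R : realType) (A : normedModType R[i]).
Local Notation C := (R[i]).
Local Notation rnorm := (@rnorm R A).
Local Notation dual := (@dual R A).
Local Notation dnorm := (@dnorm R A).
Local Notation dist := (@dist R A).
Local Notation annih := (@annih R A).
Implicit Types (a x : A) (V : set A).

Lemma hahn_banach_dual (S : set A) (f : A -> C) : S 0 ->
  (forall x y, S x -> S y -> S (x + y)) -> (forall c x, S x -> S (c *: x)) ->
  (forall x y, S x -> S y -> f (x + y) = f x + f y) ->
  (forall c x, S x -> f (c *: x) = c * f x) ->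
  (forall x, S x -> normc (f x) <= rnorm x) ->
  exists g, [/\ dual g, dnorm g <= 1 & forall x, S x -> g x = f x].
Proof.
move=> S0 SD SZ fD fZ f_le.
have [g [gD gZ g_le gS]] := @complex_hahn_banach R A setT rnorm (fun _ _ _ _ => I)
  (fun _ _ _ => I) (fun x y _ _ => rnormD x y) (fun c x _ => rnormZ c x)
  S f (fun _ _ => I) S0 SD SZ fD fZ f_le.
have dg : dual g.
  apply: bounded_dual; first by split => [x y|c x]; [exact: gD|exact: gZ].
  by exists 1 => x; rewrite mul1r g_le.
by exists g; split => //; apply: dnorm_le => // x; rewrite mul1r g_le.
Qed.

Lemma dist_le_rnorm V a v : V v -> dist a V <= rnorm (a - v).
Proof.
move=> Vv; apply: ge_inf; last by exists v.
by exists 0 => _ [w _ <-]; exact: rnorm_ge0.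
Qed.

Lemma le_dist V a r : V 0 -> (forall v, V v -> r <= rnorm (a - v)) -> r <= dist a V.
Proof.
move=> V0 h; apply: lb_le_inf; first by exists (rnorm (a - 0)), 0.
by move=> _ [v Vv <-]; exact: h.
Qed.

Lemma dist_functional V a : is_subspace V ->
  exists psi, [/\ annih V psi, dnorm psi <= 1 & psi a = (dist a V)%:C].
Proof.
move=> [V0 [VD VZ]]; set d := dist a V.
have d0 : 0 <= d by apply: le_dist => // v _; exact: rnorm_ge0.
pose S := [set x | exists c, V (x - c *: a)].
pose f x := xget 0 [set c | V (x - c *: a)] * d%:C.
have fS x c : V (x - c *: a) -> f x = c * d%:C.
  move=> Vxc; have [d_eq0|dpos] := eqVneq d 0; first by rewrite /f d_eq0 !mulr0.
  rewrite /f (xget_unique 0 (P := [set c | V (x - c *: a)]) Vxc) //.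
  move=> c' Vxc'; apply: contrapT => cc'; have : V ((c' - c)^-1 *: ((x - c *: a) - (x - c' *: a))).
    by apply: (VZ); apply: (VD) => //; rewrite -scaleN1r; exact: VZ.
  have -> : (x - c *: a) - (x - c' *: a) = (c' - c) *: a.
    by rewrite scalerBl opprB addrC subrKA.
  rewrite scalerA mulVf ?subr_eq0; last exact/eqP.
  (* [a] cannot lie in [V] since its distance to [V] is positive *)
  rewrite scale1r => /(dist_le_rnorm a); rewrite subrr rnorm0 -/d => dle0.
  by move: dpos; rewrite eq_le dle0 d0.
have [g [dg g_le gS]] : exists g, [/\ dual g, dnorm g <= 1 & forall x, S x -> g x = f x].
  apply: hahn_banach_dual.
  - by exists 0; rewrite scale0r subr0.
  - move=> x y [c Vc] [c' Vc']; exists (c + c').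
    by rewrite scalerDl opprD addrACA; exact: VD.
  - by move=> k x [c Vc]; exists (k * c); rewrite -scalerA -scalerBr; exact: VZ.
  - move=> x y [c Vc] [c' Vc']; rewrite (fS _ _ Vc) (fS _ _ Vc') (fS _ (c + c')) ?mulrDl //.
    by rewrite scalerDl opprD addrACA; exact: VD.
  - move=> k x [c Vc]; rewrite (fS _ _ Vc) (fS _ (k * c)) ?mulrA //.
    by rewrite -scalerA -scalerBr; exact: VZ.
  - move=> x [c Vc]; rewrite (fS _ _ Vc) normcM normc_real ger0_norm //.
    have [->|c0] := eqVneq c 0; first by rewrite normc0 mul0r rnorm_ge0.
    have -> : x = c *: (a - (- c^-1) *: (x - c *: a)).
      by rewrite scalerBr scalerA mulrN mulfV // scaleN1r opprK addrC subrK.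
    by rewrite rnormZ ler_wpM2l ?normc_ge0 // dist_le_rnorm //; exact: VZ.
exists g; split => //.
- split => // v Vv; rewrite gS; last by exists 0; rewrite scale0r subr0.
  by rewrite (fS _ 0) ?mul0r // scale0r subr0.
- rewrite gS; last by exists 1; rewrite scale1r subrr.
  by rewrite (fS _ 1) ?mul1r // scale1r subrr.
Qed.

Lemma norming_functional a : exists psi, [/\ dual psi, dnorm psi <= 1 & psi a = (rnorm a)%:C].
Proof.
have V0 : is_subspace [set (0 : A)].
  by split => //; split => [x y -> ->|c x ->]; rewrite ?addr0 ?scaler0.
have [psi [[dpsi _] psi_le psia]] := dist_functional a V0.
by exists psi; split => //; rewrite psia /Defs.dist image_set1 inf1 subr0.
Qed.

End HahnBanachDual.

Section NormAttainment.
Variables (R : realType) (A : normedModType R[i]).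
Local Notation C := (R[i]).
Local Notation rnorm := (@rnorm R A).
Local Notation dual := (@dual R A).
Local Notation dnorm := (@dnorm R A).
Local Notation dadd := (@Defs.dadd R A).
Local Notation dscale := (@Defs.dscale R A).

Lemma bidual_norming phi x0 : dual phi -> phi x0 != 0 ->
  exists Phi : (A -> C) -> C,
  [/\ forall chi psi, dual chi -> dual psi -> Phi (dadd chi psi) = Phi chi + Phi psi,
      forall c chi, dual chi -> Phi (dscale c chi) = c * Phi chi,
      forall chi, dual chi -> normc (Phi chi) <= dnorm chi &
      Phi phi = (dnorm phi)%:C].
Proof.
move=> dphi phix0; have m0 := dnorm_gt0 dphi phix0; set m := dnorm phi in m0 *.
have coef_uniq c c' : c *: phi = c' *: phi -> c = c'.
  by move=> /(congr1 (fun chi => chi x0)) /mulIf; apply.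
pose S := [set chi : A -> C | exists c, chi = c *: phi].
pose f chi := xget 0 [set c | chi = c *: phi] * m%:C.
have fS c : f (c *: phi) = c * m%:C.
  rewrite /f (xget_unique 0 (P := [set c' | c *: phi = c' *: phi]) (x := c)) //.
  by move=> c' /esym /coef_uniq.
have SsubD chi : S chi -> dual chi by move=> [c ->]; exact: dualZ.
have S0 : S 0 by exists 0; rewrite scale0r.
have SD chi psi : S chi -> S psi -> S (chi + psi).
  by move=> [c ->] [c' ->]; exists (c + c'); rewrite scalerDl.
have SZ k chi : S chi -> S (k *: chi) by move=> [c ->]; exists (k * c); rewrite scalerA.
have fD chi psi : S chi -> S psi -> f (chi + psi) = f chi + f psi.
  by move=> [c ->] [c' ->]; rewrite -scalerDl !fS mulrDl.
have fZ k chi : S chi -> f (k *: chi) = k * f chi.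
  by move=> [c ->]; rewrite scalerA !fS mulrA.
have f_le chi : S chi -> normc (f chi) <= dnorm chi.
  by move=> [c ->]; rewrite fS (dnormZ c dphi) normcM normc_real ger0_norm // ltW.
have [Phi [PhiD PhiZ Phi_le PhiS]] := @complex_hahn_banach R [the lmodType C of A -> C]
  dual dnorm (@dualD R A) (@dualZ R A) (@dnormD R A) (@dnormZ R A) S f
  SsubD S0 SD SZ fD fZ f_le.
exists Phi; split => //.
by rewrite -[phi]scale1r PhiS ?fS ?mul1r //; exists 1.
Qed.

Lemma dnorm_attained phi x0 : reflexive_space A -> dual phi -> phi x0 != 0 ->
  exists2 a, rnorm a = 1 & phi a = (dnorm phi)%:C.
Proof.
move=> reflA dphi phix0; have m0 := dnorm_gt0 dphi phix0.
have [Phi [PhiD PhiZ Phi_le Phi_phi]] := bidual_norming dphi phix0.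
have [a Phi_a] : exists a, forall chi, dual chi -> Phi chi = chi a.
  by apply: reflA => //; exists 1 => chi dchi; rewrite mul1r Re_normr Phi_le.
have phia : phi a = (dnorm phi)%:C by rewrite -Phi_a.
exists a => //; apply/eqP; rewrite eq_le; apply/andP; split.
  have [psi [dpsi psi_le psia]] := norming_functional a.
  have := Phi_le psi dpsi; rewrite Phi_a // psia normc_real ger0_norm ?rnorm_ge0 //.
  by move=> /le_trans; apply.
have := normc_le_dnorm a dphi; rewrite phia normc_real gtr0_norm //.
by rewrite -{1}(mulr1 (dnorm phi)) ler_pM2l.
Qed.

End NormAttainment.

Section Smulian.
Variables (R : realType) (A : normedModType R[i]).
Local Notation C := (R[i]).
Local Notation rnorm := (@rnorm R A).
Local Notation dual := (@dual R A).
Local Notation dnorm := (@dnorm R A).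
Local Notation dsub := (@Defs.dsub R A).

Lemma smooth_rnorm_symmetric a : frechet_smooth A -> rnorm a = 1 ->
  forall e : R, 0 < e -> exists2 t : R, 0 < t & forall b, rnorm b = 1 ->
    rnorm (a + t%:C *: b) + rnorm (a - t%:C *: b) <= 2 + t * e.
Proof.
move=> smA a1 e e0; have [L hL] := smA a a1.
have [eta [eta0 heta]] := hL _ (divr_gt0 e0 (ltr0Sn _ 1)).
have t0 : 0 < eta / 2 by rewrite divr_gt0.
exists (eta / 2) => // b b1; set t := eta / 2 in t0 *.
have tlt : `|t| < eta by rewrite gtr0_norm // /t; lra.
have Ntlt : `|- t| < eta by rewrite normrN.
have tneq0 : t != 0 by rewrite gt_eqF.
have Ntneq0 : - t != 0 by rewrite oppr_eq0.
have := heta b (- t) b1 Ntneq0 Ntlt.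
have := heta b t b1 tneq0 tlt.
rewrite rmorphN scaleNr opprK a1 !ltr_norml => /andP [_ h2] /andP [h1 _].
set N1 := rnorm (a + _) in h1 *; set N2 := rnorm (a - _) in h2 *.
have E1 : N1 - 1 = - t * ((N1 - 1) / - t) by rewrite mulrC divfK // oppr_eq0 gt_eqF.
have E2 : N2 - 1 = t * ((N2 - 1) / t) by rewrite mulrC divfK // gt_eqF.
move: h1 h2 E1 E2; set q1 := (N1 - 1) / - t; set q2 := (N2 - 1) / t.
by move=> h1 h2 E1 E2; nra.
Qed.

Lemma Re_le_rnorm phi x : dual phi -> dnorm phi <= 1 -> complex.Re (phi x) <= rnorm x.
Proof.
move=> dphi phi_le; apply: le_trans (Re_le_normc _) _.
apply: le_trans (normc_le_dnorm x dphi) _.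
by rewrite -[leRHS]mul1r ler_wpM2r ?rnorm_ge0.
Qed.

Lemma smulian a phi : frechet_smooth A -> rnorm a = 1 ->
  dual phi -> dnorm phi <= 1 -> phi a = 1 ->
  forall e : R, 0 < e -> exists2 del : R, 0 < del &
  forall psi, dual psi -> dnorm psi <= 1 -> 1 - del < complex.Re (psi a) ->
    dnorm (dsub psi phi) <= e.
Proof.
move=> smA a1 dphi phi_le phia e e0.
have [t t0 ht] := smooth_rnorm_symmetric smA a1 (divr_gt0 e0 (ltr0Sn _ 1)).
exists (t * (e / 2)); first by rewrite mulr_gt0 ?divr_gt0.
move=> psi dpsi psi_le psia.
have [phiD phiZ] := dual_lin dphi; have [psiD psiZ] := dual_lin dpsi.
apply: dnorm_le_Re; [exact: dualB|exact: ltW|] => b b1.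
have := Re_le_rnorm (a + t%:C *: b) dpsi psi_le.
rewrite psiD psiZ raddfD /= Re_realM => hpsi.
have := Re_le_rnorm (a - t%:C *: b) dphi phi_le.
rewrite (lin_functionalB (dual_lin dphi)) phiZ phia raddfB /= Re_realM => hphi.
(* add the norming inequalities of [psi] at [a + t b] and of [phi] at [a - t b] *)
have := ht b b1; rewrite /Defs.dsub raddfB /=.
by move: hpsi hphi psia; nra.
Qed.

End Smulian.

Section Witnesses.
Variables (R : realType) (A : normedModType R[i]).
Local Notation C := (R[i]).
Local Notation rnorm := (@rnorm R A).
Local Notation dual := (@dual R A).
Local Notation dnorm := (@dnorm R A).
Local Notation dadd := (@Defs.dadd R A).
Local Notation dsub := (@Defs.dsub R A).
Local Notation dist := (@dist R A).
Local Notation annih := (@annih R A).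
Local Notation dual_open := (@dual_open R A).

Lemma annih_SubDual (V : set A) : SubDual (annih V).
Proof.
split; first by move=> phi [].
split; first by split; [exact: dual0|].
split.
  move=> phi psi [dphi phiV] [dpsi psiV]; split; first exact: dualD.
  by move=> v Vv; rewrite /Defs.dadd phiV // psiV // addr0.
move=> c phi [dphi phiV]; split; first exact: dualZ.
by move=> v Vv; rewrite /Defs.dscale phiV // mulr0.
Qed.

Definition dist_witness (a : A) (r : R) :=
  [set phi | dual phi /\ r * dnorm phi < normc (phi a)].

Lemma dist_witness_open a r : 0 < r -> dual_open (dist_witness a r).
Proof.
move=> r0; split; first by move=> phi [].
move=> phi [dphi hphi]; set g := normc (phi a) - r * dnorm phi.
have g0 : 0 < g by rewrite subr_gt0.
have k0 : 0 < r + rnorm a + 1 by have := rnorm_ge0 a; lra.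
exists (g / (r + rnorm a + 1)); split; first by rewrite divr_gt0.
move=> psi dpsi; set D := dnorm (dsub psi phi) => hD; split => //.
have dD := dualB dpsi dphi; have D0 : 0 <= D := dnorm_ge0 dD.
have hDa : normc (phi a) <= normc (psi a) + D * rnorm a.
  have -> : phi a = psi a - dsub psi phi a by rewrite /Defs.dsub opprB addrC subrK.
  by apply: le_trans (le_normcD _ _) _; rewrite normcN lerD // normc_le_dnorm.
have hDpsi : dnorm psi <= dnorm phi + D.
  have -> : psi = dadd phi (dsub psi phi).
    by apply: funext => x; rewrite /Defs.dadd /Defs.dsub addrC subrK.
  exact: dnormD.
have hDk : D * (r + rnorm a + 1) < g by rewrite -ltr_pdivlMr.
have := rnorm_ge0 a; rewrite /g in hDk; nra.
Qed.

Lemma lt_dist_annihP (V : set A) a r : is_subspace V -> 0 < r ->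
  r < dist a V <-> exists phi, annih V phi /\ dist_witness a r phi.
Proof.
move=> subV r0; split.
  move=> rd; have [psi [[dpsi psiV] psi_le psia]] := dist_functional a subV.
  exists psi; do 2 split => //.
  rewrite psia normc_real ger0_norm; last exact: le_trans (ltW r0) (ltW rd).
  by apply: le_lt_trans rd; rewrite -[leRHS]mulr1 ler_wpM2l // ltW.
move=> [phi [[dphi phiV] [_ hphi]]].
have m0 : 0 < dnorm phi.
  apply: (dnorm_gt0 (x := a)) => //; rewrite -normc_eq0 gt_eqF //.
  by apply: le_lt_trans hphi; rewrite mulr_ge0 ?dnorm_ge0 // ltW.
apply: (lt_le_trans (y := normc (phi a) / dnorm phi)); first by rewrite ltr_pdivlMr.
apply: le_dist => [|v Vv]; first by case: subV.
have := normc_le_dnorm (a - v) dphi.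
by rewrite (lin_functionalB (dual_lin dphi)) (phiV v Vv) subr0 ler_pdivrMr // mulrC.
Qed.

Lemma dist_closed_gt0 (V : set A) x0 : V 0 -> closed V -> ~ V x0 -> 0 < dist x0 V.
Proof.
move=> V0 cV Vx0.
have [e e0 he] : exists2 e : C, 0 < e & forall v, V v -> e <= `|x0 - v|.
  apply: contrapT => H; apply: Vx0; apply: cV => B /nbhs_normP [e e0 hB].
  have : ~ (forall v, V v -> e <= `|x0 - v|) by move=> h; apply: H; exists e.
  move=> /existsNP [v /not_implyP [Vv hv]]; exists v; split => //.
  apply: hB => /=; rewrite real_ltNge; [exact/negP|exact: normr_real|exact: gtr0_real].
have eE : e = (complex.Re e)%:C by rewrite RRe_real // gtr0_real.
have E0 : 0 < complex.Re e by rewrite eE ltcR in e0.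
apply: lt_le_trans E0 _; apply: le_dist => // v Vv.
by have := he v Vv; rewrite normr_rnorm {1}eE lecR.
Qed.

End Witnesses.

Section Topologies.
Variables (R : realType) (A : normedModType R[i]).
Local Notation dual := (@dual R A).
Local Notation dnorm := (@dnorm R A).
Local Notation dsub := (@Defs.dsub R A).
Local Notation dscale := (@Defs.dscale R A).
Local Notation dist := (@dist R A).
Local Notation annih := (@annih R A).
Local Notation MaxA := (@MaxA R A).
Local Notation Uset := (@Uset R A).
Local Notation Usubbasis := (@Usubbasis R A).
Local Notation dual_open := (@dual_open R A).
Local Notation LV_open := (@LV_open R A).

Lemma U_open_is_annih_pullback (W : set (set A)) : gen_open MaxA Usubbasis W ->
  exists UU, LV_open UU /\ W = [set V | MaxA V /\ UU (annih V)].
Proof.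
move=> [WX Wloc].
pose UU := [set S | SubDual S /\ exists n (a : 'I_n -> A) (r : 'I_n -> R),
  [/\ (forall i, 0 < r i),
      (forall V, MaxA V -> (forall i, Uset (r i) (a i) V) -> W V) &
      (forall i, exists phi, S phi /\ dist_witness (a i) (r i) phi)]].
exists UU; split.
  split; first by move=> S [].
  move=> S [SS [n [a [r [r0 hW hS]]]]].
  exists n, (fun i => [set S' | SubDual S' /\
    exists phi, S' phi /\ dist_witness (a i) (r i) phi]).
  split; [|split].
  - by move=> i; exists (dist_witness (a i) (r i)); split => //; exact: dist_witness_open.
  - by move=> i; split => //; exact: hS.
  - move=> S' SS' hS'; split => //; exists n, a, r; split => // i.
    by have [_ ?] := hS' i.
apply/seteqP; split => [V WV|V [MV [_ [n [a [r [r0 hW hS]]]]]]]; last first.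
  have [subV _] := MV; apply: hW => // i; split => //.
  by apply/(lt_dist_annihP (a i) subV (r0 i)); exact: hS.
split; first exact: WX.
have [n [f [fU [fV fW]]]] := Wloc V WV.
have [a ha] := choice (fun i => (fU i : Usubbasis (f i))).
have [r hr] := choice (fun i => ha i).
split; first exact: annih_SubDual.
exists n, a, r; split.
- by move=> i; have [] := hr i.
- by move=> V' MV' hV'; apply: fW => // i; have [_ ->] := hr i; exact: hV'.
- move=> i; have [r0 fE] := hr i.
  have := fV i; rewrite fE => -[[subV _] rd].
  exact: (lt_dist_annihP _ subV r0).1 rd.
Qed.

Section NearbyAnnihilators.
Hypotheses (reflA : reflexive_space A) (smA : frechet_smooth A).

Lemma annih_meets_open_near_nonzero V0 phi O y : is_subspace V0 -> dual_open O ->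
  annih V0 phi -> O phi -> phi y != 0 ->
  exists a r, [/\ 0 < r, r < dist a V0 & forall V, is_subspace V -> r < dist a V ->
    exists chi, annih V chi /\ O chi].
Proof.
move=> subV0 [_ Oopen] [dphi phiV0] Ophi phiy; have [e [e0 he]] := Oopen _ Ophi.
have m0 := dnorm_gt0 dphi phiy; set m := dnorm phi in m0 *.
have [a a1 phia] := dnorm_attained reflA dphi phiy.
pose phin := dscale m^-1%:C phi.
have phin_le : dnorm phin <= 1.
  by rewrite dnormZ // normc_real gtr0_norm ?invr_gt0 // mulVf ?gt_eqF.
have phina : phin a = 1 by rewrite /phin /Defs.dscale phia -rmorphM mulVf ?gt_eqF.
have e2m0 : 0 < e / (2 * m) by rewrite divr_gt0 // mulr_gt0.
have [del del0 hdel] := smulian smA a1 (dualZ _ dphi) phin_le phina e2m0.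
set del' := Order.min del (1 / 2).
have del'0 : 0 < del' by rewrite lt_min del0 /=; lra.
have del'_le : del' <= del by rewrite ge_min lexx.
have del'_le2 : del' <= 1 / 2 by rewrite ge_min lexx orbT.
exists a, (1 - del'); split; first lra.
  have r0 : 0 < 1 - del' by lra.
  apply/(lt_dist_annihP a subV0 r0).
  exists phi; split; first by split.
  split => //.
  by rewrite phia normc_real gtr0_norm // gtr_pMl //; lra.
move=> V subV rd; have [psi [[dpsi psiV] psi_le psia]] := dist_functional a subV.
exists (dscale m%:C psi); split.
  by split; [exact: dualZ|move=> v Vv; rewrite /Defs.dscale psiV // mulr0].
apply: he; first exact: dualZ.
have -> : dsub (dscale m%:C psi) phi = dscale m%:C (dsub psi phin).
  apply: funext => x; rewrite /Defs.dsub /Defs.dscale /phin /Defs.dscale.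
  by rewrite mulrBr mulrA -rmorphM mulfV ?gt_eqF // mul1r.
have dpsi_phin : dual (dsub psi phin) by apply: dualB dpsi (dualZ _ dphi).
rewrite (dnormZ _ dpsi_phin) normc_real gtr0_norm //.
have := hdel psi dpsi psi_le; rewrite psia /= => /(_ ltac:(lra)).
move=> /(ler_wpM2l (ltW m0)).
have -> : m * (e / (2 * m)) = e / 2 by field; rewrite gt_eqF.
by move=> /le_lt_trans; apply; lra.
Qed.

Lemma annih_meets_open_near V0 phi O : MaxA V0 -> ~ (forall x, V0 x) -> dual_open O ->
  annih V0 phi -> O phi ->
  exists a r, [/\ 0 < r, r < dist a V0 & forall V, is_subspace V -> r < dist a V ->
    exists chi, annih V chi /\ O chi].
Proof.
move=> [subV0 clV0] V0_proper dO phiV0 Ophi.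
have [[y phiy]|phi0] := pselect (exists y, phi y != 0).
  exact: annih_meets_open_near_nonzero phiy.
have [x0 V0x0] := (existsNP _).2 V0_proper.
have d0 := dist_closed_gt0 subV0.1 clV0 V0x0.
exists x0, (dist x0 V0 / 2); split; [by rewrite divr_gt0|lra|].
move=> V _ _; exists phi; split => //; split; first by case: phiV0.
by move=> v _; apply: contrapT => /eqP phiv; apply: phi0; exists v.
Qed.

Lemma annih_pullback_is_U_open (UU : set (set (A -> R[i]))) : LV_open UU ->
  gen_open MaxA Usubbasis [set V | MaxA V /\ UU (annih V)].
Proof.
move=> [_ UUloc]; split => [V [] //|V0 [MV0 UUV0]].
have [n [f [fLV [fV0 fUU]]]] := UUloc _ UUV0.
have [Ob hOb] := choice fLV.
have meets V i : f i (annih V) -> exists phi, annih V phi /\ Ob i phi.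
  by rewrite (proj2 (hOb i)) => -[_].
have pull V : MaxA V -> (forall i, exists phi, annih V phi /\ Ob i phi) ->
    MaxA V /\ UU (annih V).
  move=> MV h; split => //; apply: fUU => [|i]; first exact: annih_SubDual.
  by rewrite (proj2 (hOb i)); split; [exact: annih_SubDual|exact: h].
have [V0_full|V0_proper] := pselect (forall x, V0 x).
  exists 0, (fun _ => set0); split; [by case|split; [by case|]].
  move=> V MV _; apply: pull => // i; have [phi [[dphi phiV0] Ophi]] := meets V0 i (fV0 i).
  by exists phi; do 2 split => //; move=> v _; exact: phiV0.
have near i : exists a r, [/\ 0 < r, r < dist a V0 & forall V, is_subspace V ->
    r < dist a V -> exists chi, annih V chi /\ Ob i chi].
  have [phi [phiV0 Ophi]] := meets V0 i (fV0 i).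
  exact: annih_meets_open_near MV0 V0_proper (proj1 (hOb i)) phiV0 Ophi.
have [a ha] := choice near; have [r hr] := choice (fun i => ha i).
exists n, (fun i => Uset (r i) (a i)); split => [i|]; last split => [i|V MV hV].
- by exists (a i), (r i); have [] := hr i.
- by split => //; have [] := hr i.
- apply: pull => // i; have [_ _] := hr i; apply; first by case: MV.
  by have [] := hV i.
Qed.

End NearbyAnnihilators.

End Topologies.

Unset Implicit Arguments.
Local Close Scope complex_scope.

Theorem lemma7p27 (R : realType) (A : normedModType R[i]) :
  @reflexive_space _ A -> @frechet_smooth _ A ->
  forall W : set (set A),
    gen_open (@MaxA _ A) (@Usubbasis _ A) W <->
    exists UU : set (set (A -> R[i])),
      @LV_open _ A UU /\ W = [set V | @MaxA _ A V /\ UU (annih V)].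
Proof.
move=> reflA smA W; split; first exact: U_open_is_annih_pullback.
by move=> [UU [UU_open ->]]; exact: annih_pullback_is_U_open.
Qed.
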